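(* Let $r\ge 2$, let $\lambda,\mu\in\Lambda$ with $\lambda\sim_e\mu$, and let $s\in\mathbb{Z}$. Then $\eta(\lambda,s)\xrightarrow{r}_1\eta(\mu,s)$ (as elements of $\mathcal{A}_r^e$) if and only if $\Phi_r(\lambda,s)\xrightarrow{e}_1\Phi_r(\mu,s)$ (as elements of $\mathcal{A}_e^r$).
   Context: Fix an integer $e\ge 2$. A partition is a weakly decreasing sequence $\lambda=(\lambda_1,\lambda_2,\dots)$ of non-negative integers with finite sum $|\lambda|$; $\Lambda$ denotes the set of partitions and $\Lambda^{(m)}$ the set of $m$-multipartitions, i.e. $m$-tuples $\boldsymbol\lambda=(\lambda^{(1)},\dots,\lambda^{(m)})$ of partitions, with $|\boldsymbol\lambda|=\sum_k|\lambda^{(k)}|$. A $\beta$-set is a subset $B\subseteq\mathbb{Z}$ containing all sufficiently small integers and no sufficiently large ones. For $\lambda\in\Lambda$ and $s\in\mathbb{Z}$ set $B_s(\lambda)=\{\lambda_i-i+s : i\ge 1\}$; every $\beta$-set equals $B_s(\lambda)$ for a unique pair $(\lambda,s)$. For $N\ge 2$ let $\mathcal{A}_N=\Lambda\times\mathbb{Z}$ (abacus configurations with $N$ runners) and $\mathcal{A}_N^m=\Lambda^{(m)}\times\mathbb{Z}^m$, where $(\boldsymbol\lambda,\mathbf{s})$ is identified with the $m$-tuple of $\beta$-sets $(B_{s_1}(\lambda^{(1)}),\dots,B_{s_m}(\lambda^{(m)}))$. The map $\eta$: for $(\lambda,s)\in\mathcal{A}_e$ with $B=B_s(\lambda)$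 and $0\le i<e$, the set $C_i=\{(b-i)/e : b\in B,\ b\equiv i \bmod e\}$ is a $\beta$-set, so $C_i=B_{t_i}(\rho_i)$ for a unique $(\rho_i,t_i)\in\Lambda\times\mathbb{Z}$; set $\eta(\lambda,s)=((\rho_0,\dots,\rho_{e-1}),(t_0,\dots,t_{e-1}))\in\Lambda^{(e)}\times\mathbb{Z}^e$, which we also regard as an element of $\mathcal{A}_r^e$. The $e$-weight of $\lambda$ is $\mathrm{wt}(\lambda)=\sum_i|\rho_i|$. For $\lambda,\mu\in\Lambda$ write $\lambda\sim_e\mu$ if $|\lambda|=|\mu|$, $\mathrm{wt}(\lambda)=\mathrm{wt}(\mu)$ and $\lambda,\mu$ have the same $e$-core (equivalently, $(\lambda,s)$ and $(\mu,s)$ have the same $t$-component under $\eta$ and the same weight, for any $s$). Moves on $\mathcal{A}_N^m$, for $(\boldsymbol\lambda,\mathbf{s}),(\boldsymbol\mu,\mathbf{s})$ with the same $\mathbf{s}$: (1) $(\boldsymbol\lambda,\mathbf{s})\xrightarrow{N}_1(\boldsymbol\mu,\mathbf{s})$ if for some $k_1,k_2\in\{1,\dots,m\}$ the tuple of $\beta$-sets of $(\boldsymbol\mu,\mathbf{s})$ is obtained from that of $(\boldsymbol\lambda,\mathbf{s})$ by replacing an element $b$ of the $k_1$-th $\beta$-set by $b-N$ (not previously in that set) and then replacing an element $c$ of the $k_2$-th $\beta$-set by $c+N$ (not previously in that set). (2) $(\boldsymbol\lambda,\mathbf{s})\xrightarrow{N}_2(\boldsymbol\mu,\mathbf{s})$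 if there exist $k_1,k_2\in\{1,\dots,m\}$, $b_1,b_2\in\mathbb{Z}$ with $b_1\equiv b_2\bmod N$, and $h>0$, such that $b_1\in B_{s_{k_1}}(\lambda^{(k_1)})$, $b_1+h\notin B_{s_{k_1}}(\lambda^{(k_1)})$, $b_2\notin B_{s_{k_2}}(\lambda^{(k_2)})$, $b_2+h\in B_{s_{k_2}}(\lambda^{(k_2)})$, and the $\beta$-sets of $(\boldsymbol\mu,\mathbf{s})$ agree with those of $(\boldsymbol\lambda,\mathbf{s})$ except that $b_1$ is replaced by $b_1+h$ in component $k_1$ and $b_2+h$ is replaced by $b_2$ in component $k_2$. Uglov's map: for $1\le k\le r$ define $\psi_k:\mathbb{Z}\to\mathbb{Z}$ by $\psi_k(ae+i)=((a+1)r-k)e+i$ for $a\in\mathbb{Z}$, $0\le i<e$. For $(\boldsymbol\lambda,\mathbf{s})\in\mathcal{A}_e^r$ the set $B=\bigsqcup_{k=1}^r\psi_k(B_{s_k}(\lambda^{(k)}))$ is a $\beta$-set, and $\Psi_r(\boldsymbol\lambda,\mathbf{s})$ is the unique $(\tilde\lambda,\tilde s)\in\mathcal{A}_e$ with $B_{\tilde s}(\tilde\lambda)=B$. $\Psi_r:\mathcal{A}_e^r\to\mathcal{A}_e$ is a bijection; $\Phi_r=\Psi_r^{-1}$. *)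

From mathcomp Require Import all_boot all_order all_algebra.
Unset Strict Implicit. Unset Printing Implicit Defensive.
From mathcomp Require Import intdiv.
Import Order.TTheory GRing.Theory Num.Theory.
Local Open Scope ring_scope.

Definition is_partition (l : seq nat) : bool :=
  sorted geq l && all (fun a => (0 < a)%N) l.

Definition psize (l : seq nat) : nat := sumn l.

(* beta-set B_s(lambda) = { lambda_i - i + s : i >= 1 } (lambda_i = 0 for
   i > size lambda), as a boolean predicate on int. *)
Definition beta (l : seq nat) (s : int) (x : int) : bool :=
  (x < s - (size l)%:Z) ||
  has (fun i => x == (nth 0%N l i)%:Z - (i.+1)%:Z + s) (iota 0 (size l)).

Definition zrange (L U : int) : seq int :=
  [seq L + k%:Z | k <- iota 0 (absz (U - L))].

(* The unique (rho, t) with B = B_t(rho), computed from a beta-set B and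
   bounds L <= U such that B contains every x < L and no x >= U. *)
Definition from_beta (B : int -> bool) (L U : int) : seq nat * int :=
  let S := [seq x <- rev (zrange L U) | B x] in
  let n := size S in
  let t := L + n%:Z in
  ([seq a <- [seq absz ((nth (0:int) S i + (i.+1)%:Z - t)%R) | i <- iota 0 n] | (0 < a)%N],
   t).

Definition betaL (l : seq nat) (s : int) : int := s - (size l)%:Z.
Definition betaU (l : seq nat) (s : int) : int := s + (foldr maxn 0%N l)%:Z.

(* eta(lambda, s) : the e-quotient with charges, an element of A_r^e
   indexed by i : 'I_e (i = 0..e-1). *)
Definition eta (e : nat) (l : seq nat) (s : int) (i : 'I_e) : seq nat * int :=
  from_beta (fun y => beta l s (e%:Z * y + (i : nat)%:Z))
            ((betaL l s %/ e%:Z)%Z - 1) ((betaU l s %/ e%:Z)%Z + 1).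

(* e-weight of lambda (independent of the charge; computed with s = 0) *)
Definition wt (e : nat) (l : seq nat) : nat :=
  \sum_(i < e) psize (eta e l 0 i).1.

(* lambda ~_e mu : same size, same weight, same e-core; the latter is
   expressed (as in the paper) by equality of the t-components of eta. *)
Definition sim_e (e : nat) (l m : seq nat) : Prop :=
  psize l = psize m /\ wt e l = wt e m /\
  (forall i : 'I_e, (eta e l 0 i).2 = (eta e m 0 i).2).

(* Uglov's psi_k (1 <= k <= r): psi_k(a e + i) = ((a+1) r - k) e + i *)
Definition psi (e r k : nat) (y : int) : int :=
  ((((y %/ e%:Z)%Z + 1) * r%:Z - k%:Z) * e%:Z + (y %% e%:Z)%Z).

(* Phi_r = Psi_r^{-1} : A_e -> A_e^r.  Since the psi_k have pairwise
   disjoint images covering Z, the k-th beta-set of Phi_r(lambda,s) is the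
   preimage psi_k^{-1}(B_s(lambda)).  Component j : 'I_r is k = j+1. *)
Definition Phi (e r : nat) (l : seq nat) (s : int) (j : 'I_r) : seq nat * int :=
  from_beta (fun y => beta l s (psi e r j.+1 y))
            ((betaL l s %/ r%:Z)%Z - e%:Z - 1) ((betaU l s %/ r%:Z)%Z + e%:Z + 1).

Definition upd (m : nat) (B : 'I_m -> int -> bool) (k : 'I_m) (old new : int)
  : 'I_m -> int -> bool :=
  fun j x => if j == k then (if x == new then true
                            else if x == old then false else B j x)
             else B j x.

(* The move  X  -N->_1  Y  on A_N^m (X, Y given as m-tuples of
   (partition, charge); the charges must agree). *)
Definition move1 (N m : nat) (X Y : 'I_m -> seq nat * int) : Prop :=
  (forall j, (X j).2 = (Y j).2) /\
  let B := fun j => beta (X j).1 (X j).2 in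
  exists (k1 k2 : 'I_m) (b c : int),
    B k1 b /\ ~~ B k1 (b - N%:Z) /\
    let B' := upd m B k1 b (b - N%:Z) in
    B' k2 c /\ ~~ B' k2 (c + N%:Z) /\
    (forall j x, beta (Y j).1 (Y j).2 x = upd m B' k2 c (c + N%:Z) j x).

(* Write B := B_s(lambda). The beta-sets of eta(lambda, s) are the slices
   {q | e q + i \in B}, those of Phi_r(lambda, s) the preimages psi_k^-1(B).
   In both cases the coordinates (i, q) |-> e q + i, resp. (k, y) |-> psi_k(y),
   form a bijection from runner positions to Z, and they turn a shift by r on
   a runner of eta, resp. by e on a component of Phi, into a shift by e r in B,
   because psi_k(y - e) = psi_k(y) - e r.  So both sides say that a move by e r
   on the single beta-set B leads from B_s(lambda) to B_s(mu).  The condition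
   on charges in a move is automatic: a move does not change the number of
   beads in a window containing the moved beads. *)

From mathcomp Require Import all_boot all_order all_algebra.
From mathcomp Require Import zify ring intdiv.
Import Order.TTheory GRing.Theory Num.Theory.
Local Open Scope ring_scope.

Lemma mem_zrange (L U x : int) : L <= U -> (x \in zrange L U) = (L <= x < U).
Proof.
move=> LU; apply/mapP/idP => [[k] | hx].
  by rewrite mem_iota => /andP[_ hk] ->; lia.
exists (absz (x - L)); last by lia.
by rewrite mem_iota; lia.
Qed.

Lemma zrange_uniq (L U : int) : uniq (zrange L U).
Proof. by rewrite map_inj_uniq ?iota_uniq // => a b /=; lia. Qed.

Lemma zrange_sorted (L U : int) : sorted <%R (zrange L U).
Proof.
apply: (homo_sorted (e := ltn)); last exact: iota_ltn_sorted.
by move=> a b /=; lia.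
Qed.

Lemma zrange_cat (L M U : int) : L <= M -> M <= U ->
  zrange L U = zrange L M ++ zrange M U.
Proof.
move=> LM MU; rewrite /zrange.
have -> : absz (U - L) = (absz (M - L) + absz (U - M))%N by lia.
rewrite iotaD map_cat -[in iota (absz (M - L)) _](addn0 (absz (M - L))).
rewrite iotaDl -map_comp.
by congr (_ ++ _); apply: eq_map => k /=; lia.
Qed.

Definition beta_window (P : pred int) (L U : int) : Prop :=
  [/\ L <= U, forall x, x < L -> P x & forall x, U <= x -> ~~ P x].

Lemma count_zrange_widen {P : pred int} {L U L' U' : int} :
  L' <= L -> U <= U' -> beta_window P L U ->
  L' + (count P (zrange L' U'))%:Z = L + (count P (zrange L U))%:Z.
Proof.
move=> LL' UU' [LU hL hU].
rewrite (zrange_cat _ _ _ LL' (le_trans LU UU')) (zrange_cat _ _ _ LU UU').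
rewrite !count_cat.
have /eqP-> : count P (zrange L' L) == size (zrange L' L).
  by rewrite -all_count; apply/allP => x; rewrite mem_zrange // => /andP[_ /hL].
have /eqP-> : count P (zrange U U') == 0%N.
  rewrite -leqn0 leqNgt -has_count; apply/hasPn => x.
  by rewrite mem_zrange // => /andP[/hU].
by rewrite size_map size_iota; lia.
Qed.

Lemma beta_rcons0 (w : seq nat) (t x : int) : beta (rcons w 0%N) t x = beta w t x.
Proof.
rewrite /beta size_rcons -addn1 iotaD has_cat /= nth_rcons ltnn eqxx orbF.
rewrite (@eq_in_has _ _ (fun i => x == (nth 0%N w i)%:Z - i.+1%:Z + t)); last first.
  by move=> i; rewrite mem_iota => /andP[_ hi]; rewrite nth_rcons hi.
by case: has; rewrite ?orbT //= orbF; apply/idP/idP; lia.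
Qed.

Lemma beta_cat_nseq0 (w : seq nat) k (t x : int) :
  beta (w ++ nseq k 0%N) t x = beta w t x.
Proof.
elim: k => [|k IH]; first by rewrite cats0.
by rewrite -addn1 nseqD catA cats1 beta_rcons0.
Qed.

Lemma sorted_geq_zeros_last (w : seq nat) : sorted geq w ->
  exists k, w = [seq a <- w | (0 < a)%N] ++ nseq k 0%N.
Proof.
elim: w => [|a w IH] hw; first by exists 0%N.
case: a hw => [|a] hw /=; last first.
  by have [k wE] := IH (path_sorted hw); exists k; rewrite {1}wE.
have geq_trans : transitive geq by move=> ? ? ? h1 h2; apply: leq_trans h2 h1.
have /all_pred1P wE : all (pred1 0%N) w.
  by apply: sub_all (order_path_min geq_trans hw) => y /=; rewrite leqn0.
by exists (size w).+1; rewrite [in filter _ w]wE filter_nseq mul0n /= -wE.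
Qed.

Lemma beta_filter_pos (w : seq nat) (t x : int) : sorted geq w ->
  beta [seq a <- w | (0 < a)%N] t x = beta w t x.
Proof.
by case/sorted_geq_zeros_last => k wE; rewrite [in RHS]wE beta_cat_nseq0.
Qed.

Lemma decreasing_gap (S : seq int) (i j : nat) :
  sorted >%R S -> (i <= j < size S)%N ->
  nth (0 : int) S j + (j - i)%:Z <= nth (0 : int) S i.
Proof.
move=> sS; elim: j => [|j IH] /andP[ij jS].
  by rewrite (_ : i = 0%N) ?addr0 //; lia.
have [->|ij'] := eqVneq i j.+1; first by rewrite subnn addr0.
have gt_trans : transitive (>%R : rel int).
  by move=> ? ? ? h1 h2; apply: lt_trans h2 h1.
have step : nth (0 : int) S j.+1 < nth (0 : int) S j.
  by apply: (sorted_ltn_nth gt_trans) => //; rewrite inE; lia.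
have /IH : (i <= j < size S)%N by lia.
lia.
Qed.

(* [from_beta P L U] is [([seq a <- beta_parts S t | 0 < a], t)], where S
   lists the beads of P in [L, U) decreasingly and t = L + size S. *)
Definition beta_parts (S : seq int) (t : int) : seq nat :=
  [seq absz (nth (0 : int) S i + (i.+1)%:Z - t)%R | i <- iota 0 (size S)].

Section BetaParts.

Variables (S : seq int) (L : int).
Hypotheses (sS : sorted >%R S) (S_geL : all (fun y => L <= y) S).

Local Notation t := (L + (size S)%:Z).

Lemma beta_parts_nthE i : (i < size S)%N ->
  (nth 0%N (beta_parts S t) i)%:Z = nth (0 : int) S i + (i.+1)%:Z - t.
Proof.
move=> iS; rewrite (nth_map 0%N) ?size_iota // nth_iota // add0n gez0_abs //.
have S_last : L <= nth (0 : int) S (size S).-1.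
  by apply/(allP S_geL)/mem_nth; rewrite ltn_predL; lia.
have := @decreasing_gap S i (size S).-1 sS.
by case: (size S) iS S_last => // n; lia.
Qed.

Lemma sorted_beta_parts : sorted geq (beta_parts S t).
Proof.
apply/(sortedP 0%N) => i; rewrite size_map size_iota => iS.
have := beta_parts_nthE i (ltnW iS); have := beta_parts_nthE i.+1 iS.
have := @decreasing_gap S i i.+1 sS; rewrite /geq /=; lia.
Qed.

Lemma beta_beta_parts x : beta (beta_parts S t) t x = (x < L) || (x \in S).
Proof.
rewrite /beta size_map size_iota addrK; congr (_ || _).
apply/hasP/(nthP (0 : int)) => -[i].
  rewrite mem_iota add0n => /andP[_ iS] /eqP xE; exists i => //.
  by rewrite beta_parts_nthE // in xE; rewrite xE; ring.
move=> iS <-; exists i; first by rewrite mem_iota.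
by rewrite beta_parts_nthE //; apply/eqP; ring.
Qed.

End BetaParts.

Lemma beta_from_beta {P : pred int} {L U : int} : beta_window P L U ->
  beta (from_beta P L U).1 (from_beta P L U).2 =1 P.
Proof.
move=> [LU hL hU] x; rewrite /from_beta /=.
set S := [seq y <- rev (zrange L U) | P y].
have memS y : (y \in S) = P y && (L <= y < U).
  by rewrite mem_filter mem_rev mem_zrange.
have sS : sorted >%R S.
  apply: sorted_filter; first by move=> ? ? ? h1 h2; apply: lt_trans h2 h1.
  by rewrite rev_sorted; apply: zrange_sorted.
have S_geL : all (fun y => L <= y) S by apply/allP => y; rewrite memS => /and3P[].
rewrite beta_filter_pos ?sorted_beta_parts // beta_beta_parts // memS.
case: (ltP x L) => [/hL -> // | Lx] /=; case Px: (P x) => //=.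
by case: (ltP x U) => // /hU; rewrite Px.
Qed.

Lemma from_beta_charge (P : pred int) (L U : int) :
  (from_beta P L U).2 = L + (count P (zrange L U))%:Z.
Proof. by rewrite /from_beta /= size_filter count_rev. Qed.

Lemma count_add_eq (T : Type) (a b c d : pred T) (s : seq T) :
  (forall x, a x + b x = c x + d x)%N ->
  (count a s + count b s = count c s + count d s)%N.
Proof. by move=> h; elim: s => //= x s IH; have := h x; lia. Qed.

Lemma count_upd m (B : 'I_m -> int -> bool) k o n j (W : seq int) :
  uniq W -> o \in W -> n \in W -> B k o -> ~~ B k n ->
  count (upd m B k o n j) W = count (B j) W.
Proof.
move=> uW oW nW Bo Bn; rewrite /upd; case: eqP => [->|_] //.
have on : o != n by apply: contraNneq Bn => <-.
have hpoint (x : int) :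
    ((if x == n then true else if x == o then false else B k x) + (x == o)
     = B k x + (x == n))%N.
  case: (eqVneq x n) => [->|_]; first by rewrite eq_sym (negbTE on) (negbTE Bn).
  by case: (eqVneq x o) => [->|_]; rewrite ?Bo.
have := @count_add_eq _ _ _ _ _ W hpoint.
by rewrite !count_uniq_mem // oW nW; lia.
Qed.

Definition move1_at (N m : nat) (BX BY : 'I_m -> int -> bool)
    (k1 k2 : 'I_m) (b c : int) : Prop :=
  BX k1 b /\ ~~ BX k1 (b - N%:Z) /\
  upd m BX k1 b (b - N%:Z) k2 c /\ ~~ upd m BX k1 b (b - N%:Z) k2 (c + N%:Z) /\
  (forall j x, BY j x = upd m (upd m BX k1 b (b - N%:Z)) k2 c (c + N%:Z) j x).

Definition move1_beta (N m : nat) (BX BY : 'I_m -> int -> bool) : Prop :=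
  exists k1 k2 b c, move1_at N m BX BY k1 k2 b c.

Lemma move1E N m (X Y : 'I_m -> seq nat * int) :
  move1 N m X Y <-> (forall j, (X j).2 = (Y j).2) /\
    move1_beta N m (fun j => beta (X j).1 (X j).2) (fun j => beta (Y j).1 (Y j).2).
Proof. by []. Qed.

Definition abacus_iso (N N' : nat) {m m' : nat}
    (F : 'I_m * int -> 'I_m' * int) : Prop :=
  [/\ injective F, forall z, exists p, F p = z
    & forall k x, F (k, x - N%:Z) = ((F (k, x)).1, (F (k, x)).2 - N'%:Z)].

Lemma upd_if m (B : 'I_m -> int -> bool) k0 o n k x :
  upd m B k0 o n k x =
  if (k, x) == (k0, n) then true else if (k, x) == (k0, o) then false else B k x.
Proof. by rewrite /upd !xpair_eqE; case: (k == k0). Qed.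

Lemma upd_transfer {m m'} {F : 'I_m * int -> 'I_m' * int}
    {B : 'I_m -> int -> bool} {C : 'I_m' -> int -> bool} {k0 o n k0' o' n'} :
  injective F -> (forall k x, B k x = C (F (k, x)).1 (F (k, x)).2) ->
  F (k0, o) = (k0', o') -> F (k0, n) = (k0', n') ->
  forall k x, upd m B k0 o n k x = upd m' C k0' o' n' (F (k, x)).1 (F (k, x)).2.
Proof.
move=> F_inj hBC Fo Fn k x.
by rewrite !upd_if -surjective_pairing -Fo -Fn !(inj_eq F_inj) -hBC.
Qed.

Section Transfer.

Context {N N' m m' : nat} {F : 'I_m * int -> 'I_m' * int}.
Hypothesis isoF : abacus_iso N N' F.
Context {PX PY : 'I_m -> int -> bool} {QX QY : 'I_m' -> int -> bool}.
Hypotheses (PQX : forall k x, PX k x = QX (F (k, x)).1 (F (k, x)).2)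
           (PQY : forall k x, PY k x = QY (F (k, x)).1 (F (k, x)).2).

Lemma abacus_iso_shiftD k x :
  F (k, x + N%:Z) = ((F (k, x)).1, (F (k, x)).2 + N'%:Z).
Proof.
have [_ _ F_shift] := isoF.
have := F_shift k (x + N%:Z); rewrite addrK => -> /=.
by rewrite subrK -surjective_pairing.
Qed.

Lemma move1_at_transfer {k1 k2 b c k1' k2' b' c'} :
  F (k1, b) = (k1', b') -> F (k2, c) = (k2', c') ->
  move1_at N m PX PY k1 k2 b c <-> move1_at N' m' QX QY k1' k2' b' c'.
Proof.
have [F_inj F_surj F_shift] := isoF; move=> Fb Fc.
have Fb' : F (k1, b - N%:Z) = (k1', b' - N'%:Z) by rewrite F_shift Fb.
have Fc' : F (k2, c + N%:Z) = (k2', c' + N'%:Z) by rewrite abacus_iso_shiftD Fc.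
have PQ1 := upd_transfer F_inj PQX Fb Fb'.
have PQ2 := upd_transfer F_inj PQ1 Fc Fc'.
rewrite /move1_at !PQX !PQ1 Fb Fb' Fc Fc' /=.
split=> -[-> [-> [-> [-> hY]]]]; do 4!split=> //.
  move=> j' y; have [[j x] Fjx] := F_surj (j', y).
  by rewrite -[j']/((j', y).1) -[y]/((j', y).2) -Fjx -PQY -PQ2 hY.
by move=> j x; rewrite PQY PQ2 hY.
Qed.

Lemma move1_beta_transfer : move1_beta N m PX PY <-> move1_beta N' m' QX QY.
Proof.
have [_ F_surj _] := isoF.
split=> -[k1 [k2 [b [c mv]]]].
  case Fb: (F (k1, b)) => [k1' b']; case Fc: (F (k2, c)) => [k2' c'].
  by exists k1', k2', b', c'; rewrite -(move1_at_transfer Fb Fc).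
have [[k1' b'] Fb] := F_surj (k1, b); have [[k2' c'] Fc] := F_surj (k2, c).
by exists k1', k2', b', c'; rewrite (move1_at_transfer Fb Fc).
Qed.

End Transfer.

Lemma eq_move1_beta N m (BX BY BX' BY' : 'I_m -> int -> bool) :
  BX =2 BX' -> BY =2 BY' -> move1_beta N m BX BY <-> move1_beta N m BX' BY'.
Proof.
move=> hX hY; apply: (@move1_beta_transfer _ _ _ _ id) => //.
by split=> // z; exists z.
Qed.

Section FromBeta.

Context {N m : nat} {PX PY : 'I_m -> int -> bool} {LX UX LY UY : 'I_m -> int}.
Hypotheses (PX_window : forall j, beta_window (PX j) (LX j) (UX j))
           (PY_window : forall j, beta_window (PY j) (LY j) (UY j)).

Lemma move1_beta_charge : move1_beta N m PX PY ->
  forall j, (from_beta (PX j) (LX j) (UX j)).2 = (from_beta (PY j) (LY j) (UY j)).2.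
Proof.
move=> [k1 [k2 [b [c [Xb [Xb' [Yc [Yc' hY]]]]]]]] j.
pose L := Num.min (Num.min (LX j) (LY j)) (Num.min (b - N%:Z) c).
pose U := Num.max (Num.max (UX j) (UY j)) (Num.max b (c + N%:Z)) + 1.
have [[LXU _ _] [LYU _ _]] := (PX_window j, PY_window j).
have [LXL LYL UXU UYU] : [/\ L <= LX j, L <= LY j, UX j <= U & UY j <= U].
  by split; rewrite /L /U; lia.
have [bW bW' cW cW'] : [/\ b \in zrange L U, b - N%:Z \in zrange L U,
                          c \in zrange L U & c + N%:Z \in zrange L U].
  by split; rewrite mem_zrange /L /U; lia.
rewrite !from_beta_charge -(count_zrange_widen LXL UXU (PX_window j)).
rewrite -(count_zrange_widen LYL UYU (PY_window j)) (eq_count (hY j)).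
by rewrite !count_upd ?zrange_uniq.
Qed.

Lemma move1_from_beta :
  move1 N m (fun j => from_beta (PX j) (LX j) (UX j))
            (fun j => from_beta (PY j) (LY j) (UY j)) <-> move1_beta N m PX PY.
Proof.
rewrite move1E (@eq_move1_beta N m _ _ PX PY
                 (fun j => beta_from_beta (PX_window j))
                 (fun j => beta_from_beta (PY_window j))).
by split=> [[]|mv] //; split=> //; apply: move1_beta_charge.
Qed.

End FromBeta.

Lemma euclid_divmodE {d : nat} (k : 'I_d) (q : int) :
  ((d%:Z * q + k%:Z) %/ d%:Z)%Z = q /\ ((d%:Z * q + k%:Z) %% d%:Z)%Z = k%:Z.
Proof.
have kd := ltn_ord k; have dn0 : d%:Z != 0 by lia.
rewrite mulrC divzMDl // modzMDl divz_small ?addr0 ?modz_small //; lia.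
Qed.

Lemma euclid_inj (d : nat) (k k' : 'I_d) (q q' : int) :
  d%:Z * q + k%:Z = d%:Z * q' + k'%:Z -> (k, q) = (k', q').
Proof.
move=> E; have [qE kE] := euclid_divmodE k q.
have [q'E k'E] := euclid_divmodE k' q'.
by rewrite -qE -q'E E; congr pair; apply: val_inj; move: kE k'E; rewrite E => -> [].
Qed.

Lemma euclid_surj {d : nat} (z : int) : (0 < d)%N ->
  exists (k : 'I_d) (q : int), z = d%:Z * q + k%:Z.
Proof.
move=> d0; have d0' : 0 < d%:Z by lia.
have kd : (absz (z %% d%:Z)%Z < d)%N.
  by have := ltz_pmod z d0'; have := modz_ge0 z (lt0r_neq0 d0'); lia.
exists (Ordinal kd), (z %/ d%:Z)%Z; rewrite /= gez0_abs ?modz_ge0 ?lt0r_neq0 //.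
by rewrite mulrC -divz_eq.
Qed.

(* The runner positions of eta(lambda, s) and of Phi_r(lambda, s) as positions
   in the single beta-set B_s(lambda), seen as a 1-tuple. *)
Definition eta_coord (e : nat) (p : 'I_e * int) : 'I_1 * int :=
  (ord0, e%:Z * p.2 + (p.1 : nat)%:Z).

Definition Phi_coord (e r : nat) (p : 'I_r * int) : 'I_1 * int :=
  (ord0, psi e r p.1.+1 p.2).

Lemma psi_euclid (e r : nat) (j : 'I_r) (i : 'I_e) (a : int) :
  psi e r j.+1 (e%:Z * a + i%:Z)
  = e%:Z * (r%:Z * a + (rev_ord j : nat)%:Z) + i%:Z.
Proof.
have [qE iE] := euclid_divmodE i a; rewrite /psi qE iE /= -subzn ?ltn_ord //.
by ring.
Qed.

Lemma psi_shift (e r k : nat) (y : int) : (0 < e)%N ->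
  psi e r k (y - e%:Z) = psi e r k y - (e * r)%N%:Z.
Proof.
move=> e0; have en0 : e%:Z != 0 by lia.
have -> : y - e%:Z = (-1) * e%:Z + y by ring.
by rewrite /psi divzMDl // modzMDl PoszM; ring.
Qed.

Lemma eta_coord_iso (e r : nat) :
  (0 < e)%N -> abacus_iso r (e * r) (eta_coord e).
Proof.
move=> e0; split.
- by move=> [i q] [i' q'] [/euclid_inj].
- move=> [k z]; have [i [q ->]] := euclid_surj z e0.
  by exists (i, q); rewrite [k]ord1.
- by move=> i q; rewrite /eta_coord /= PoszM; congr pair; ring.
Qed.

Lemma Phi_coord_iso (e r : nat) : (0 < e)%N -> (0 < r)%N ->
  abacus_iso e (e * r) (Phi_coord e r).
Proof.
move=> e0 r0; split.
- move=> [j y] [j' y'] [] /=.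
  have [i [a ->]] := euclid_surj y e0; have [i' [a' ->]] := euclid_surj y' e0.
  rewrite !psi_euclid => /euclid_inj [-> E].
  move: (euclid_inj _ (rev_ord j) (rev_ord j') a a' E) => [rjE ->].
  by have /rev_ord_inj -> : rev_ord j = rev_ord j' by apply/val_inj/rjE.
- move=> [k x]; have [i [q ->]] := euclid_surj x e0.
  have [j [a ->]] := euclid_surj q r0.
  exists (rev_ord j, e%:Z * a + i%:Z).
  by rewrite /Phi_coord psi_euclid rev_ordK [k]ord1.
- by move=> j y; rewrite /Phi_coord /= psi_shift.
Qed.

Lemma nth_le_max (l : seq nat) i : (nth 0%N l i <= foldr maxn 0%N l)%N.
Proof.
elim: l i => [|a l IH] [|i] //=; first by rewrite leq_maxl.
exact: leq_trans (IH i) (leq_maxr _ _).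
Qed.

Lemma beta_window_comp (l : seq nat) (s : int) (f : int -> int) (L U : int) :
  L <= U -> (forall y, y < L -> f y < betaL l s) ->
  (forall y, U <= y -> betaU l s <= f y) ->
  beta_window (fun y => beta l s (f y)) L U.
Proof.
move=> LU hL hU; split=> // y => [/hL | /hU]; rewrite /beta /betaL /betaU.
  by move=> ->.
move=> h; rewrite negb_or; apply/andP; split; first lia.
apply/hasPn => i; rewrite mem_iota => /andP[_ hi].
by have := nth_le_max l i; lia.
Qed.

Lemma eta_window (e : nat) (l : seq nat) (s : int) (i : 'I_e) :
  beta_window (fun y => beta l s (e%:Z * y + i%:Z))
              ((betaL l s %/ e%:Z)%Z - 1) ((betaU l s %/ e%:Z)%Z + 1).
Proof.
have ie := ltn_ord i; have e0 : 0 < e%:Z by lia.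
have LU : betaL l s <= betaU l s by rewrite /betaL /betaU; lia.
have := lez_floor (betaL l s) (lt0r_neq0 e0); have := ltz_ceil (betaU l s) e0.
have := lez_floor (betaU l s) (lt0r_neq0 e0).
move: (betaL l s %/ e%:Z)%Z (betaU l s %/ e%:Z)%Z => D D' hU' hU hL.
apply: beta_window_comp => [|y hy|y hy]; nia.
Qed.

Lemma Phi_window (e r : nat) (l : seq nat) (s : int) : (0 < e)%N ->
  forall j : 'I_r,
  beta_window (fun y => beta l s (psi e r j.+1 y))
    ((betaL l s %/ r%:Z)%Z - e%:Z - 1) ((betaU l s %/ r%:Z)%Z + e%:Z + 1).
Proof.
move=> e0 j; have jr := ltn_ord j; have r0 : 0 < r%:Z by lia.
have e0' : 0 < e%:Z by lia.
have LU : betaL l s <= betaU l s by rewrite /betaL /betaU; lia.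
have := lez_floor (betaL l s) (lt0r_neq0 r0); have := ltz_ceil (betaU l s) r0.
have := lez_floor (betaU l s) (lt0r_neq0 r0).
move: (betaL l s %/ r%:Z)%Z (betaU l s %/ r%:Z)%Z => D D' hU' hU hL.
apply: beta_window_comp => [|y hy|y hy]; first nia.
all: have := lez_floor y (lt0r_neq0 e0'); have := ltz_ceil y e0'.
all: have := modz_ge0 y (lt0r_neq0 e0'); have := ltz_pmod y e0'; rewrite /psi.
all: move: (y %/ e%:Z)%Z (y %% e%:Z)%Z => a i; nia.
Qed.

Theorem lemma2p11 (e r : nat) (l m : seq nat) (s : int) :
  (2 <= e)%N -> (2 <= r)%N ->
  is_partition l -> is_partition m ->
  sim_e e l m ->
  (move1 r e (eta e l s) (eta e m s) <-> move1 e r (Phi e r l s) (Phi e r m s)).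
Proof.
move=> e_ge2 r_ge2 _ _ _.
have e_gt0 : (0 < e)%N by lia.
have r_gt0 : (0 < r)%N by lia.
rewrite (move1_from_beta (eta_window e l s) (eta_window e m s)).
rewrite (move1_from_beta (Phi_window e r l s e_gt0) (Phi_window e r m s e_gt0)).
rewrite (move1_beta_transfer (eta_coord_iso e r e_gt0)
           (QX := fun _ => beta l s) (QY := fun _ => beta m s)) //.
by rewrite (move1_beta_transfer (Phi_coord_iso e r e_gt0 r_gt0)
              (QX := fun _ => beta l s) (QY := fun _ => beta m s)).
Qed.
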